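(* Let $\mathbb{K}=(G,M,I)$ be a finite formal context, and let $\cdot'$ denote derivation in $\mathbb{K}$ and $\cdot^{!}$ derivation in $BC(\mathbb{K})$. For every object $g\in G$, setting $\overline{A}:=\{\overline m\in\overline{\mathcal{M}(M)}\mid (g,m)\notin I\}$, we have $\overline{A}^{!}=g^{!}=g'$. In particular every intent of $\mathbb{K}$ is an intent of $BC(\mathbb{K})$, and the objects of $G$ are reducible in $BC(\mathbb{K})$ in the sense that the object intents of $G$ are intersections of object intents of new objects $\overline m$.
   Context: For a formal context $\mathbb{K}=(G,M,I)$, derivation operators: $A'=\{m\in M\mid\forall g\in A:(g,m)\in I\}$, $B'=\{g\in G\mid\forall m\in B:(g,m)\in I\}$; intents are sets $B\subseteq M$ with $B''=B$; $g'$ abbreviates $\{g\}'$. For $m,n\in M$ write $m\ge_{\mathbb{K}}n$ iff $\{m\}'\supseteq\{n\}'$. Let $\mathcal{M}(M)$ be the set of attributes $m$ whose attribute concept $(\{m\}',\{m\}'')$ is meet-irreducible in the concept lattice of $\mathbb{K}$, and $\overline{\mathcal{M}(M)}=\{\overline m\mid m\in\mathcal{M}(M)\}$ new elements. The Birkhoff completion of $\mathbb{K}$ is $BC(\mathbb{K}):=\big(G\cup\overline{\mathcal{M}(M)},M,I\cup\{(\overline m,n)\in\overline{\mathcal{M}(M)}\times M\mid m\not\ge_{\mathbb{K}}n\}\big)$. For $\overline A\subseteq\overline{\mathcal{M}(M)}$, $\overline A^{!}=\{n\in M\mid \forall\overline m\in\overline A: m\not\ge_{\mathbb{K}} n\}$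 (with $\emptyset^{!}=M$). *)

From mathcomp Require Import all_boot.
Set Implicit Arguments. Unset Strict Implicit. Unset Printing Implicit Defensive.

Section FCA.
Variables (G M : finType).

Definition intent (I : G -> M -> bool) (A : {set G}) : {set M} :=
  [set m | [forall g in A, I g m]].
Definition extent (I : G -> M -> bool) (B : {set M}) : {set G} :=
  [set g | [forall m in B, I g m]].

Definition is_concept (I : G -> M -> bool) (c : {set G} * {set M}) : bool :=
  (intent I c.1 == c.2) && (extent I c.2 == c.1).

Definition meet_irreducible (I : G -> M -> bool) (c : {set G} * {set M}) : bool :=
  [&& is_concept I c, c.1 != setT &
  ~~ [exists x : {set G} * {set M}, exists y : {set G} * {set M},
        [&& is_concept I x, is_concept I y, c.1 \proper x.1, c.1 \proper y.1 &
            [forall z : {set G} * {set M},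
               (is_concept I z && (z.1 \subset x.1) && (z.1 \subset y.1))
                 ==> (z.1 \subset c.1)]]]].

Definition attr_concept (I : G -> M -> bool) (m : M) : {set G} * {set M} :=
  (extent I [set m], intent I (extent I [set m])).

Definition Mirr (I : G -> M -> bool) : {set M} :=
  [set m | meet_irreducible I (attr_concept I m)].

Definition geK (I : G -> M -> bool) (m n : M) : bool :=
  extent I [set n] \subset extent I [set m].

Definition Mbar (I : G -> M -> bool) := {m : M | m \in Mirr I}.

Definition BCobj (I : G -> M -> bool) := (G + Mbar I)%type.
Definition BCI (I : G -> M -> bool) (x : BCobj I) (n : M) : bool :=
  match x with
  | inl g => I g n
  | inr mb => ~~ geK I (val mb) n
  end.

Definition bang (I : G -> M -> bool) (Abar : {set Mbar I}) : {set M} :=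
  [set n | [forall mb in Abar, ~~ geK I (val mb) n]].

End FCA.

From mathcomp Require Import all_boot.

(* Whenever (g, n) is not in I, choose an attribute m >= n with (g, m) not in I
   whose extent {m}' is as large as possible.  Every concept strictly above the
   attribute concept of m must contain g, so the meet of any two of them lies
   above the object concept of g, which {m}' does not contain: m is
   meet-irreducible.  Hence the new object m-bar excludes n from g^!, which
   gives g^! = g'.  Intents of K stay closed in BC(K) because the old objects
   are still there. *)

Set Implicit Arguments.
Unset Strict Implicit.
Unset Printing Implicit Defensive.

Section ConceptLattice.
Variables (G M : finType) (I : G -> M -> bool).

Lemma extentP (B : {set M}) g :
  reflect (forall m, m \in B -> I g m) (g \in extent I B).
Proof. by rewrite inE; apply: forall_inP. Qed.

Lemma intentP (A : {set G}) m :
  reflect (forall g, g \in A -> I g m) (m \in intent I A).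
Proof. by rewrite inE; apply: forall_inP. Qed.

Lemma extentS (B1 B2 : {set M}) : B1 \subset B2 -> extent I B2 \subset extent I B1.
Proof.
move=> sB12; apply/subsetP=> g /extentP IgB2; apply/extentP=> m mB1.
exact/IgB2/(subsetP sB12).
Qed.

Lemma sub_extent_intent (A : {set G}) : A \subset extent I (intent I A).
Proof. by apply/subsetP=> g gA; apply/extentP=> m /intentP; apply. Qed.

Lemma sub_intent_extent (B : {set M}) : B \subset intent I (extent I B).
Proof. by apply/subsetP=> m mB; apply/intentP=> g /extentP; apply. Qed.

Lemma extent_intent_extent (B : {set M}) : extent I (intent I (extent I B)) = extent I B.
Proof.
apply/eqP; rewrite eqEsubset sub_extent_intent andbT.
exact/extentS/sub_intent_extent.
Qed.

Lemma intent_extent_intent (A : {set G}) : intent I (extent I (intent I A)) = intent I A.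
Proof.
apply/eqP; rewrite eqEsubset sub_intent_extent andbT.
apply/subsetP=> m /intentP Im; apply/intentP=> g gA.
exact/Im/(subsetP (sub_extent_intent A)).
Qed.

Lemma attr_concept_is_concept m : is_concept I (attr_concept I m).
Proof. by rewrite /is_concept /= extent_intent_extent !eqxx. Qed.

Lemma object_concept_is_concept g :
  is_concept I (extent I (intent I [set g]), intent I [set g]).
Proof. by rewrite /is_concept /= intent_extent_intent !eqxx. Qed.

Lemma object_concept_least (c : {set G} * {set M}) g :
  is_concept I c -> g \in c.1 -> extent I (intent I [set g]) \subset c.1.
Proof.
case/andP=> _ /eqP <- gc; apply: extentS; apply/subsetP=> m mc.
by apply/intentP=> _ /set1P ->; move/extentP: gc; apply.
Qed.

Lemma notin_concept_attr (c : {set G} * {set M}) g :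
  is_concept I c -> g \notin c.1 ->
  exists2 k, ~~ I g k & c.1 \subset extent I [set k].
Proof.
case/andP=> _ /eqP <-; rewrite inE negb_forall_in => /existsP[k /andP[kc Igk]].
by exists k => //; apply: extentS; rewrite sub1set.
Qed.

Lemma Mirr_attr_excluding m g :
  g \notin extent I [set m] ->
  (forall c, is_concept I c -> extent I [set m] \proper c.1 -> g \in c.1) ->
  m \in Mirr I.
Proof.
move=> gNm above_m; rewrite inE /meet_irreducible attr_concept_is_concept /=.
apply/andP; split; first by apply: contraNneq gNm => ->; rewrite inE.
apply/negP=> /existsP[x /existsP[y /and5P[cx cy mx my /forallP meet_xy]]].
have := meet_xy (extent I (intent I [set g]), intent I [set g]).
rewrite object_concept_is_concept /=.
rewrite !object_concept_least ?above_m //= => /subsetP/(_ g) gm.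
by rewrite gm ?(subsetP (sub_extent_intent _)) ?set11 in gNm.
Qed.

Lemma exists_Mirr_above g n :
  ~~ I g n -> exists mb : Mbar I, ~~ I g (val mb) && geK I (val mb) n.
Proof.
move=> Ign; pose P m := ~~ I g m && geK I m n.
have Pn : P n by rewrite /P Ign /geK subxx.
case: (arg_maxnP (fun m => #|extent I [set m]|) Pn) => m /andP[Igm nm] m_max.
have gNm : g \notin extent I [set m].
  by apply/negP=> /extentP/(_ m (set11 m)); apply/negP.
suff mMirr : m \in Mirr I by exists (exist _ m mMirr); rewrite /= Igm.
apply: (Mirr_attr_excluding gNm) => c cc mc; apply/negPn/negP=> gNc.
have [k Igk ck] := notin_concept_attr cc gNc.
have mk := proper_sub_trans mc ck.
have := m_max k; rewrite /P Igk /geK (subset_trans nm (proper_sub mk)) => /(_ isT) /=.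
by rewrite leqNgt proper_card.
Qed.

End ConceptLattice.

Section BirkhoffCompletion.
Variables (G M : finType) (I : G -> M -> bool).

Lemma BCI_intent_old g : intent (@BCI G M I) [set inl g] = intent I [set g].
Proof.
apply/setP=> n; apply/intentP/intentP=> Ig x /set1P ->.
- exact: (Ig (inl g) (set11 _)).
- exact: (Ig g (set11 _)).
Qed.

Lemma BCI_intent_new (mb : Mbar I) :
  intent (@BCI G M I) [set inr mb] = [set n | ~~ geK I (val mb) n].
Proof.
apply/setP=> n; rewrite inE; apply/intentP/idP=> [Nn | Nmn _ /set1P -> //].
exact: (Nn (inr mb) (set11 _)).
Qed.

Lemma bang_bigcap (Abar : {set Mbar I}) :
  bang Abar = \bigcap_(mb in Abar) intent (@BCI G M I) [set inr mb].
Proof.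
apply/setP=> n; rewrite inE; apply/forall_inP/bigcapP=> Nn mb mbA.
- by rewrite BCI_intent_new inE Nn.
- by move: (Nn mb mbA); rewrite BCI_intent_new inE.
Qed.

Lemma bang_object g : bang [set mb : Mbar I | ~~ I g (val mb)] = intent I [set g].
Proof.
apply/setP=> n; rewrite inE; apply/forall_inP/intentP=> [Nn _ /set1P -> | Ign mb].
- apply/negPn/negP=> /exists_Mirr_above[mb /andP[Igm mn]].
  by move: (Nn mb); rewrite inE Igm mn => /(_ isT).
- rewrite inE; apply: contra => /subsetP/(_ g) gm.
  have gn : g \in extent I [set n] by apply/extentP=> _ /set1P ->; exact/Ign/set11.
  by move/extentP: (gm gn); apply; rewrite set11.
Qed.

Lemma BCI_closure_sub (B : {set M}) :
  intent (@BCI G M I) (extent (@BCI G M I) B) \subset intent I (extent I B).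
Proof.
apply/subsetP=> n /intentP In; apply/intentP=> g gB.
by apply: (In (inl g)); apply/extentP=> m mB; move/extentP: gB; apply.
Qed.

Lemma BCI_intent_closed (B : {set M}) :
  intent I (extent I B) = B -> intent (@BCI G M I) (extent (@BCI G M I) B) = B.
Proof.
move=> closedB; apply/eqP; rewrite eqEsubset sub_intent_extent andbT.
by rewrite -{2}closedB BCI_closure_sub.
Qed.

End BirkhoffCompletion.

Theorem mainTheorem6 (G M : finType) (I : G -> M -> bool) :
  (forall g : G,
     let Abar := [set mb : Mbar I | ~~ I g (val mb)] in
     [/\ bang Abar = intent (@BCI G M I) [set inl g],
         intent (@BCI G M I) [set inl g] = intent I [set g] &
         intent I [set g] =
           \bigcap_(mb in Abar) intent (@BCI G M I) [set inr mb]])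
  /\
  (forall B : {set M}, intent I (extent I B) = B ->
     intent (@BCI G M I) (extent (@BCI G M I) B) = B).
Proof.
split; last exact: BCI_intent_closed.
move=> g Abar; rewrite /Abar -bang_bigcap BCI_intent_old bang_object.
by split.
Qed.
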